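(* Let $\mathbb S$ be the stack monad over a finite set $\Gamma=\{\gamma_1,\dots,\gamma_n\}$ and let $\mathbb T$ be a finitary monad on $\mathbf{Set}$. Then the tensor product $\mathbb S\otimes\mathbb T$ is isomorphic to the monad $\mathbb R$ where $RX$ consists of those $p:\Gamma^*\to T(X\times\Gamma^* )$ for which there is $m$ such that $p(su)=\big(\mathsf{do}\ \langle x,s'\rangle\leftarrow p(s);\ \eta\langle x,s'u\rangle\big)$ for all $s,u\in\Gamma^*$ with $|s|\ge m$, and whose unit and Kleisli extension are those of the store monad transform of $\mathbb T$ with store $\Gamma^*$ (i.e. $\mathbb R$ is a submonad of that transform).
   Context: The stack monad over $\Gamma$: $SX$ is the set of maps $\langle r,t\rangle:\Gamma^*\to X\times\Gamma^*$ such that for some $k$, $r(wu)=r(w)$ and $t(wu)=t(w)u$ for all $w\in\Gamma^k$, $u\in\Gamma^*$; its algebraic theory (the stack theory) has operations $pop$ of arity $n+1$ and unary $push_i$ ($1\le i\le n$) with axioms $push_i(pop(x_1,\dots,x_n,y))=x_i$, $pop(push_1(x),\dots,push_n(x),x)=x$, $pop(x_1,\dots,x_n,pop(y_1,\dots,y_n,z))=pop(x_1,\dots,x_n,z)$. For a monad $\mathbb T$ and set $S$, the store monad transform $\mathbb T_S$ has $T_SX=T(X\times S)^S$, unit $\eta(x)(s)=\eta^{\mathbb T}(x,s)$ and Kleisli extension $f^\dagger(p)(s)=\mathsf{do}\ \langle x,s'\rangle\leftarrow p(s);\ f(x)(s')$, where $\mathsf{do}\ y\leftarrow q;\ g(y)$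 denotes $g^\dagger(q)$. Finitary monads correspond to algebraic theories. The tensor product $\mathcal E_1\otimes\mathcal E_2$ of algebraic theories is the theory generated by the operations and equations of both plus, for every $f:n\to1$ of $\mathcal E_1$ and $g:m\to1$ of $\mathcal E_2$, the tensor law $f(g(x_1^1,\dots,x_m^1),\dots,g(x_1^n,\dots,x_m^n))=g(f(x_1^1,\dots,x_1^n),\dots,f(x_m^1,\dots,x_m^n))$; the tensor of finitary monads is the monad of the tensor of their theories. *)

From mathcomp Require Import all_boot.
From Stdlib Require Import IndefiniteDescription.
Set Implicit Arguments. Unset Strict Implicit. Unset Printing Implicit Defensive.

Definition monad_laws (T : Type -> Type) (retT : forall X, X -> T X)
    (bindT : forall X Y, (X -> T Y) -> T X -> T Y) : Prop :=
  (forall X Y (f : X -> T Y) (x : X), bindT X Y f (retT X x) = f x) /\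
  (forall X (t : T X), bindT X X (retT X) t = t) /\
  (forall X Y Z (f : X -> T Y) (g : Y -> T Z) (t : T X),
      bindT Y Z g (bindT X Y f t) = bindT X Z (fun x => bindT Y Z g (f x)) t).

(* Finitary: every element of T X lies in the image of T f for some
   f : {0..n-1} -> X (equivalently, of T of a finite subset of X). *)
Definition finitary (T : Type -> Type) (retT : forall X, X -> T X)
    (bindT : forall X Y, (X -> T Y) -> T X -> T Y) : Prop :=
  forall X (t : T X), exists n (f : 'I_n -> X) (t' : T 'I_n),
    bindT 'I_n X (fun i => retT X (f i)) t' = t.

Section Tensor.
Variable Gam : finType.
Variable T : Type -> Type.
Variable retT : forall X, X -> T X.
Variable bindT : forall X Y, (X -> T Y) -> T X -> T Y.

(* Terms over the combined signature of the stack theory (pop of arity |Gam|+1,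
   push_g unary) and the canonical theory of T (n-ary operations = T 'I_n). *)
Inductive term (X : Type) : Type :=
| Var of X
| Pop of (Gam -> term X) & term X
| Push of Gam & term X
| Op (n : nat) of T 'I_n & ('I_n -> term X).

Arguments Var {X}. Arguments Pop {X}. Arguments Push {X}. Arguments Op {X n}.

Fixpoint subst X Y (f : X -> term Y) (t : term X) : term Y :=
  match t with
  | Var x => f x
  | Pop xs z => Pop (fun g => subst f (xs g)) (subst f z)
  | Push g z => Push g (subst f z)
  | Op n o ts => Op o (fun i => subst f (ts i))
  end.

Fixpoint stack_only X (t : term X) : Prop :=
  match t with
  | Var _ => True
  | Pop xs z => (forall g, stack_only (xs g)) /\ stack_only z
  | Push _ z => stack_only z
  | Op _ _ _ => False
  end.

Fixpoint T_only X (t : term X) : Prop :=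
  match t with
  | Var _ => True
  | Pop _ _ => False
  | Push _ _ => False
  | Op _ _ ts => forall i, T_only (ts i)
  end.

(* Derivable equality in the tensor theory (stack theory) (x) (theory of T):
   least congruence containing all substitution instances of the axioms. *)
Inductive eqv (X : Type) : term X -> term X -> Prop :=
| eqv_refl t : eqv t t
| eqv_sym t u : eqv t u -> eqv u t
| eqv_trans t u v : eqv t u -> eqv u v -> eqv t v
| eqv_Pop xs ys z z' :
    (forall g, eqv (xs g) (ys g)) -> eqv z z' -> eqv (Pop xs z) (Pop ys z')
| eqv_Push g z z' : eqv z z' -> eqv (Push g z) (Push g z')
| eqv_Op n (o : T 'I_n) ts us :
    (forall i, eqv (ts i) (us i)) -> eqv (Op o ts) (Op o us)
| ax_push_pop g xs y : eqv (Push g (Pop xs y)) (xs g)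
| ax_pop_push x : eqv (Pop (fun g => Push g x) x) x
| ax_pop_pop xs ys z : eqv (Pop xs (Pop ys z)) (Pop xs z)
| ax_T_unit n (i : 'I_n) (ts : 'I_n -> term X) :
    eqv (Op (retT i) ts) (ts i)
| ax_T_mult n m (o : T 'I_n) (s : 'I_n -> T 'I_m) (ts : 'I_m -> term X) :
    eqv (Op o (fun i => Op (s i) ts)) (Op (bindT s o) ts)
| ax_tensor n m (f : term 'I_n) (g : term 'I_m) (x : 'I_n -> 'I_m -> term X) :
    stack_only f -> T_only g ->
    eqv (subst (fun i => subst (fun j => x i j) g) f)
        (subst (fun j => subst (fun i => x i j) f) g).

(* The tensor monad S (x) T: free algebras = terms modulo eqv. *)
Definition tens (X : Type) : Type := {P : term X -> Prop | exists t, P = eqv t}.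

Definition cls X (t : term X) : tens X :=
  exist (fun P => exists t0, P = eqv t0) (eqv t) (ex_intro _ t erefl).

Definition rep X (q : tens X) : term X :=
  proj1_sig (constructive_indefinite_description _ (proj2_sig q)).

Definition tens_ret X (x : X) : tens X := cls (Var x).

Definition tens_bind X Y (f : X -> tens Y) (q : tens X) : tens Y :=
  cls (subst (fun x => rep (f x)) (rep q)).

Definition stT (X : Type) : Type := seq Gam -> T (X * seq Gam).

Definition st_ret X (x : X) : stT X := fun s => retT (x, s).

Definition st_bind X Y (f : X -> stT Y) (p : stT X) : stT Y :=
  fun s => bindT (fun xs : X * seq Gam => f xs.1 xs.2) (p s).

Definition inR X (p : stT X) : Prop :=
  exists m, forall s u : seq Gam, m <= size s ->
    p (s ++ u) = bindT (fun xs : X * seq Gam => retT (xs.1, xs.2 ++ u)) (p s).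

End Tensor.

From mathcomp Require Import all_boot.
From Stdlib Require Import IndefiniteDescription FunctionalExtensionality
  PropExtensionality ProofIrrelevance Classical.

Set Implicit Arguments. Unset Strict Implicit. Unset Printing Implicit Defensive.

(* The comparison map sends a term of the tensor theory to its semantics in
   T_S (pop inspects the top of the stack, push_g conses g, operations of T
   bind).  Soundness: the semantics validates every axiom, the tensor law
   because stack-only terms are deterministic stack programs and T-only terms
   denote an element of T.  Compatibility with unit and Kleisli extension is
   the substitution lemma.  Completeness and surjectivity onto R come from a normal form:
   'read p k' pops up to k symbols and then outputs a finite presentation of
   the resulting element of T (X * seq Gam) as an operation of T over pushes.
   Every term is derivably equal to the normal form of its semantics at large
   depth (finitarity of T presents its elements as finitary operations, and
   the tensor law moves these past pop), and the normal form of an element p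
   of R interprets back to p.  The file follows this order: semantics and
   soundness, the R condition, the algebra of T-operations in the tensor
   theory, normal forms and completeness, and finally the comparison map. *)

Section StackTensor.
Variable Gam : finType.
Variable T : Type -> Type.
Variable retT : forall X, X -> T X.
Variable bindT : forall X Y, (X -> T Y) -> T X -> T Y.
Hypothesis HT : monad_laws retT bindT.

Notation tm := (term Gam T).
Notation var := (Var Gam T).
Notation eqv := (@eqv Gam T retT bindT _).
Notation stT := (@stT Gam T).

Lemma bindT_retl X Y (f : X -> T Y) x : bindT f (retT x) = f x.
Proof. by case: HT => H _; apply: H. Qed.

Lemma bindT_retr X (t : T X) : bindT (@retT X) t = t.
Proof. by case: HT => _ [H _]; apply: H. Qed.

Lemma bindT_assoc X Y Z (f : X -> T Y) (g : Y -> T Z) t :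
  bindT g (bindT f t) = bindT (fun x => bindT g (f x)) t.
Proof. by case: HT => _ [_ H]; apply: H. Qed.

Definition Tmap A B (f : A -> B) (t : T A) : T B := bindT (fun a => retT (f a)) t.

Lemma Tmap_comp A B C (f : A -> B) (g : B -> C) t :
  Tmap g (Tmap f t) = Tmap (fun a => g (f a)) t.
Proof.
rewrite /Tmap bindT_assoc; congr bindT; apply: functional_extensionality => a.
by rewrite bindT_retl.
Qed.

(* Semantics of terms in the store transform with store Gam^*, relative to a
   valuation rho of the variables: the stack is a list whose head is its top,
   pop branches on the top symbol (its last argument handles the empty stack),
   push_g conses g, and an operation o of T binds over its arity. *)
Fixpoint sem V X (rho : V -> stT X) (t : tm V) : stT X :=
  match t with
  | Var v => rho v
  | Pop xs z => fun s => if s is g :: s' then sem rho (xs g) s' else sem rho z [::]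
  | Push g z => fun s => sem rho z (g :: s)
  | Op _ o ts => fun s => bindT (fun i => sem rho (ts i) s) o
  end.

Definition interp X (t : tm X) : stT X := sem (@st_ret Gam T retT X) t.

Lemma sem_subst U V X (rho : V -> stT X) (sg : U -> tm V) (t : tm U) :
  sem rho (subst sg t) = sem (fun u => sem rho (sg u)) t.
Proof.
elim: t => [u|xs IH z IHz|g z IHz|n o ts IH] //=.
- by apply: functional_extensionality => -[|g s] /=; rewrite ?IH ?IHz.
- by rewrite IHz.
- apply: functional_extensionality => s; congr bindT.
  by apply: functional_extensionality => i; rewrite IH.
Qed.

Lemma sem_st_bind X Y (rho : X -> stT Y) (t : tm X) :
  sem rho t = st_bind bindT rho (interp t).
Proof.
rewrite /st_bind /interp; elim: t => [x|xs IH z IHz|g z IHz|n o ts IH] /=.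
- by apply: functional_extensionality => s; rewrite /st_ret bindT_retl.
- by apply: functional_extensionality => -[|g s] /=; rewrite ?IH ?IHz.
- by apply: functional_extensionality => s; rewrite IHz.
- apply: functional_extensionality => s; rewrite bindT_assoc; congr bindT.
  by apply: functional_extensionality => i; rewrite IH.
Qed.

Lemma stack_only_sem V (f : tm V) : stack_only f -> forall s,
  exists v s', forall X (rho : V -> stT X), sem rho f s = rho v s'.
Proof.
elim: f => [v|xs IH z IHz|g z IHz|n o ts IH] //=.
- by move=> _ s; exists v, s.
- by move=> [Hxs Hz] [|g s] /=; [apply: IHz | apply: IH].
- by move=> Hz s; apply: IHz.
Qed.

Fixpoint Tden V (t : tm V) : T V :=
  match t with
  | Var v => retT v
  | Pop _ z => Tden z
  | Push _ z => Tden z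
  | Op _ o ts => bindT (fun i => Tden (ts i)) o
  end.

Lemma T_only_sem V (g : tm V) : T_only g ->
  forall X (rho : V -> stT X) s, sem rho g s = bindT (fun v => rho v s) (Tden g).
Proof.
elim: g => [v|xs IH z IHz|g z IHz|n o ts IH] //= Hg X rho s.
- by rewrite bindT_retl.
- rewrite bindT_assoc; congr bindT; apply: functional_extensionality => i.
  exact: IH.
Qed.

(* The semantics validates the tensor law: a deterministic stack program
   commutes with binding over an element of T. *)
Lemma sem_tensor_law V X n m (f : tm 'I_n) (g : tm 'I_m)
    (x : 'I_n -> 'I_m -> tm V) (rho : V -> stT X) :
  stack_only f -> T_only g ->
  sem rho (subst (fun i => subst (x i) g) f)
  = sem rho (subst (fun j => subst (fun i => x i j) f) g).
Proof.
move=> /stack_only_sem Hf /T_only_sem Hg; apply: functional_extensionality => s.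
have [i [s' Hi]] := Hf s.
rewrite !sem_subst Hi sem_subst !Hg; congr bindT.
by apply: functional_extensionality => j; rewrite sem_subst Hi.
Qed.

Lemma eqv_sound X (t u : tm X) : eqv t u ->
  forall Y (rho : X -> stT Y), sem rho t = sem rho u.
Proof.
elim=> {t u} /=.
- by [].
- by move=> t u _ IH Y rho; rewrite IH.
- by move=> t u v _ IH1 _ IH2 Y rho; rewrite IH1 IH2.
- move=> xs ys z z' _ IH _ IHz Y rho.
  by apply: functional_extensionality => -[|g s] /=; rewrite ?IH ?IHz.
- by move=> g z z' _ IH Y rho; rewrite IH.
- move=> n o ts us _ IH Y rho; apply: functional_extensionality => s.
  by congr bindT; apply: functional_extensionality => i; rewrite IH.
- by [].
- by move=> x Y rho; apply: functional_extensionality => -[|g s].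
- by move=> xs ys z Y rho; apply: functional_extensionality => -[|g s].
- by move=> n i ts Y rho; apply: functional_extensionality => s; rewrite bindT_retl.
- by move=> n m o s ts Y rho; apply: functional_extensionality => st; rewrite bindT_assoc.
- by move=> n m f g x Hf Hg Y rho; apply: sem_tensor_law.
Qed.

(* The defining condition of R: beyond depth m the stack below is never
   touched, i.e. it is just carried along. *)
Definition extend X (u : seq Gam) (xs : X * seq Gam) : T (X * seq Gam) :=
  retT (xs.1, xs.2 ++ u).

Definition Rbound X (p : stT X) (m : nat) : Prop :=
  forall s u, m <= size s -> p (s ++ u) = bindT (extend u) (p s).

Lemma Rbound_mono X (p : stT X) m m' : m <= m' -> Rbound p m -> Rbound p m'.
Proof. by move=> Hm Hp s u Hs; apply: Hp; apply: leq_trans Hs. Qed.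

Definition eventually (P : nat -> Prop) : Prop := exists M, forall m, M <= m -> P m.

Lemma eventually_fin (I : finType) (P : I -> nat -> Prop) :
  (forall i, eventually (P i)) -> eventually (fun m => forall i, P i m).
Proof.
move=> /(_ _) /constructive_indefinite_description HP.
exists (\max_i proj1_sig (HP i)) => m Hm i.
by apply: (proj2_sig (HP i)); apply: leq_trans (leq_bigmax i) Hm.
Qed.

Lemma interp_Rbound X (t : tm X) : exists m, Rbound (interp t) m.
Proof.
have ev p : (exists m, Rbound p m) -> eventually (Rbound p).
  by case=> m Hm; exists m => m' Hm'; apply: Rbound_mono Hm.
elim: t => [x|xs IH z IHz|g z IHz|n o ts IH].
- by exists 0 => s u _; rewrite /interp /= /st_ret bindT_retl.
- have [B HB] := eventually_fin (fun g => ev _ _ (IH g)).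
  by exists B.+1 => -[//|g s] u Hs; apply: (HB B).
- have [m Hm] := IHz; exists m => s u Hs /=.
  exact: (Hm (g :: s) u (leqW Hs)).
- have [B HB] := eventually_fin (fun i => ev _ _ (IH i)).
  exists B => s u Hs; rewrite /interp /= bindT_assoc; congr bindT.
  by apply: functional_extensionality => i; apply: (HB B).
Qed.

(* An operation o of T applied to leaves w (h i) is the operation Tmap h o
   applied to w: the unit and multiplication axioms of the theory of T. *)
Lemma op_reindex X a b (h : 'I_a -> 'I_b) (o : T 'I_a) (w : 'I_b -> tm X) :
  eqv (Op o (fun i => w (h i))) (Op (Tmap h o) w).
Proof.
apply: eqv_trans (ax_T_mult retT bindT _ _ _); apply: eqv_Op => i.
by apply: eqv_sym; apply: (ax_T_unit retT bindT).
Qed.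

(* For leaves w (L i) an operation u can be replaced by one computed from its
   image Tmap L u alone: r sends each value of L to (the unit at) one chosen
   index carrying that value; u0 is an arbitrary filler off the range of L. *)
Lemma op_collapse X Y N (L : 'I_N -> Y) (u0 : T 'I_N) (w : Y -> tm X) :
  exists r : Y -> T 'I_N, forall u : T 'I_N,
    eqv (Op u (fun i => w (L i))) (Op (bindT r (Tmap L u)) (fun i => w (L i))).
Proof.
have [r Hr] : exists r : Y -> T 'I_N,
    forall i, exists j, r (L i) = retT j /\ L j = L i.
  have [r Hr] : exists r : Y -> T 'I_N,
      forall y, (exists i, L i = y) -> exists j, r y = retT j /\ L j = y.
    apply: (functional_choice (fun y (ry : T 'I_N) =>
      (exists i, L i = y) -> exists j, ry = retT j /\ L j = y)) => y.
    case: (classic (exists i, L i = y)) => [[i Hi]|Hy].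
    - by exists (retT i) => _; exists i.
    - by exists u0.
  by exists r => i; apply: Hr; exists i.
have [q Hq] := functional_choice _ Hr.
exists r => u.
have -> : bindT r (Tmap L u) = Tmap q u.
  rewrite /Tmap bindT_assoc; congr bindT; apply: functional_extensionality => i.
  by rewrite bindT_retl; case: (Hq i).
apply: eqv_trans (op_reindex q u (fun j => w (L j))); apply: eqv_Op => i.
by case: (Hq i) => _ ->; apply: eqv_refl.
Qed.

(* Both sides are first reindexed over
   the disjoint union of the two arities and then collapsed. *)
Lemma op_Tmap_congr X Y (w : Y -> tm X) k1 (f1 : 'I_k1 -> Y) (o1 : T 'I_k1)
    k2 (f2 : 'I_k2 -> Y) (o2 : T 'I_k2) :
  Tmap f1 o1 = Tmap f2 o2 ->
  eqv (Op o1 (fun i => w (f1 i))) (Op o2 (fun i => w (f2 i))).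
Proof.
move=> Ho.
pose L (r : 'I_#|{: 'I_k1 + 'I_k2}|) : Y :=
  match enum_val r with inl a => f1 a | inr b => f2 b end.
pose e1 (a : 'I_k1) := enum_rank (inl a : 'I_k1 + 'I_k2).
pose e2 (b : 'I_k2) := enum_rank (inr b : 'I_k1 + 'I_k2).
have [r Hr] := op_collapse L (Tmap e1 o1) w.
have through k (e : 'I_k -> 'I_#|{: 'I_k1 + 'I_k2}|) (f : 'I_k -> Y) o :
    (forall i, L (e i) = f i) ->
    eqv (Op o (fun i => w (f i))) (Op (bindT r (Tmap f o)) (fun i => w (L i))).
  move=> Hf; have -> : f = (fun i => L (e i)) by apply: functional_extensionality.
  apply: eqv_trans (op_reindex e o (fun j => w (L j))) _.
  by rewrite -(Tmap_comp e L); apply: Hr.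
have He1 a : L (e1 a) = f1 a by rewrite /L enum_rankK.
have He2 b : L (e2 b) = f2 b by rewrite /L enum_rankK.
apply: eqv_trans (through _ e1 f1 o1 He1) _.
by rewrite Ho; apply: eqv_sym; apply: (through _ e2).
Qed.

Lemma op_flatten X Y (w : Y -> tm X) n (o : T 'I_n) (k : 'I_n -> nat)
    (os : forall i, T 'I_(k i)) (fs : forall i, 'I_(k i) -> Y) :
  exists N (F : 'I_N -> Y) (t : T 'I_N),
    Tmap F t = bindT (fun i => Tmap (fs i) (os i)) o /\
    eqv (Op o (fun i => Op (os i) (fun j => w (fs i j)))) (Op t (fun r => w (F r))).
Proof.
pose F (r : 'I_#|{: {i : 'I_n & 'I_(k i)}}|) := fs (tag (enum_val r)) (tagged (enum_val r)).
pose e i (j : 'I_(k i)) := enum_rank (Tagged (fun i => 'I_(k i)) j).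
have He i j : F (e i j) = fs i j by rewrite /F /e enum_rankK.
exists _, F, (bindT (fun i => Tmap (e i) (os i)) o); split.
  rewrite {1}/Tmap bindT_assoc; congr bindT; apply: functional_extensionality => i.
  rewrite [bindT _ _](Tmap_comp (e i) F); congr Tmap.
  by apply: functional_extensionality => j; rewrite He.
apply: eqv_trans (ax_T_mult retT bindT _ _ _); apply: eqv_Op => i.
apply: eqv_trans (op_reindex (e i) (os i) (fun r => w (F r))).
by apply: eqv_Op => j; rewrite He; apply: eqv_refl.
Qed.

(* An instance of the tensor law: pop commutes with operations of T. *)
Lemma op_pop X n (o : T 'I_n) (A : 'I_n -> Gam -> tm X) (B : 'I_n -> tm X) :
  eqv (Op o (fun i => Pop (A i) (B i))) (Pop (fun g => Op o (fun i => A i g)) (Op o B)).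
Proof.
(* pop is the (|Gam|+1)-ary operation with argument 0 for the empty stack *)
pose x (v : 'I_#|Gam|.+1) (i : 'I_n) :=
  if unlift ord0 v is Some r then A i (enum_val r) else B i.
have Hx g i : x (lift ord0 (enum_rank g)) i = A i g by rewrite /x liftK enum_rankK.
have Hx0 i : x ord0 i = B i by rewrite /x unlift_none.
have /= H := ax_tensor retT bindT
  (f := Pop (fun g => var (lift ord0 (enum_rank g))) (var ord0))
  (g := Op o (fun i => var i)) x (conj (fun _ => I) I) (fun _ => I).
apply: (@eqv_trans _ _ _ _ _ _
  (Op o (fun i => Pop (fun g => x (lift ord0 (enum_rank g)) i) (x ord0 i)))).
  apply: eqv_Op => i; rewrite Hx0; apply: eqv_Pop => [g|]; rewrite ?Hx; exact: eqv_refl.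
apply: eqv_trans (eqv_sym H) _.
by apply: eqv_Pop => [g|]; apply: eqv_Op => i; rewrite ?Hx ?Hx0; apply: eqv_refl.
Qed.

Hypothesis Hfin : finitary retT bindT.

Record presentation Y := Presentation {
  arity : nat; leaves : 'I_arity -> Y; shape : T 'I_arity }.
Arguments leaves {Y} p i.

Lemma presentation_exists Y (y : T Y) :
  exists p : presentation Y, Tmap (leaves p) (shape p) = y.
Proof. by have [n [f [o E]]] := Hfin y; exists (Presentation f o). Qed.

Definition pres Y (y : T Y) : presentation Y :=
  proj1_sig (constructive_indefinite_description _ (presentation_exists y)).

Lemma presP Y (y : T Y) : Tmap (leaves (pres y)) (shape (pres y)) = y.
Proof.
exact: proj2_sig (constructive_indefinite_description _ (presentation_exists y)).
Qed.

Fixpoint pushes X (l : seq Gam) (z : tm X) : tm X :=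
  if l is g :: l' then pushes l' (Push g z) else z.

Lemma sem_pushes V X (rho : V -> stT X) l z u :
  sem rho (pushes l z) u = sem rho z (l ++ u).
Proof. by elim: l z u => [|g l IH] z u //=; rewrite IH. Qed.

Lemma pushes_rcons X l g (z : tm X) : pushes (rcons l g) z = Push g (pushes l z).
Proof. by elim: l z => [|h l IH] z //=; rewrite IH. Qed.

Definition stacked X (xl : X * seq Gam) : tm X := pushes xl.2 (var xl.1).

Definition leaf X (y : T (X * seq Gam)) : tm X :=
  Op (shape (pres y)) (fun i => stacked (leaves (pres y) i)).

Fixpoint read X (p : stT X) (k : nat) (acc : seq Gam) : tm X :=
  if k is k'.+1 then Pop (fun g => read p k' (rcons acc g)) (leaf (p acc))
  else leaf (p acc).

Lemma read_shift X (p : stT X) k g acc :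
  read p k (g :: acc) = read (fun s => p (g :: s)) k acc.
Proof.
elim: k acc => [|k IH] acc //=; congr Pop.
by apply: functional_extensionality => h; rewrite IH.
Qed.

Lemma leaf_ret X (xl : X * seq Gam) : eqv (leaf (retT xl)) (stacked xl).
Proof.
apply: eqv_trans (ax_T_unit retT bindT (@ord0 0) (fun _ => stacked xl)).
apply: (op_Tmap_congr (@stacked X) (f2 := fun _ : 'I_1 => xl)).
by rewrite presP /Tmap bindT_retl.
Qed.

(* The normal form of a variable is the variable itself, by pop_push. *)
Lemma read_var X (x : X) k acc : eqv (read (interp (var x)) k acc) (pushes acc (var x)).
Proof.
elim: k acc => [|k IH] acc /=; first exact: leaf_ret.
apply: eqv_trans (ax_pop_push retT bindT _); apply: eqv_Pop => [g|]; last exact: leaf_ret.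
by rewrite -pushes_rcons; apply: IH.
Qed.

Lemma leaf_op X n (o : T 'I_n) (ys : 'I_n -> T (X * seq Gam)) :
  eqv (Op o (fun i => leaf (ys i))) (leaf (bindT ys o)).
Proof.
have [N [F [t [HF Ht]]]] := op_flatten (@stacked X) o
  (fun i => shape (pres (ys i))) (fun i => leaves (pres (ys i))).
apply: eqv_trans Ht _; apply: op_Tmap_congr.
rewrite HF presP; congr bindT; apply: functional_extensionality => i.
exact: presP.
Qed.

(* Normal forms are closed under operations of T (by the tensor law for pop). *)
Lemma read_op X n (o : T 'I_n) (ps : 'I_n -> stT X) k acc :
  eqv (Op o (fun i => read (ps i) k acc))
      (read (fun s => bindT (fun i => ps i s) o) k acc).
Proof.
elim: k acc => [|k IH] acc /=; first exact: leaf_op.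
apply: eqv_trans (op_pop _ _ _) _.
by apply: eqv_Pop => [g|]; [apply: IH | apply: leaf_op].
Qed.

Lemma pop_read X (A : Gam -> tm X) p k acc :
  eqv (Pop A (read p k acc)) (Pop A (leaf (p acc))).
Proof. by case: k => [|k] /=; [apply: eqv_refl | apply: ax_pop_pop]. Qed.

Lemma push_read X (p : stT X) k g acc :
  eqv (Push g (read p k.+1 acc)) (read p k (rcons acc g)).
Proof. exact: ax_push_pop. Qed.

Lemma normal_form X (t : tm X) : eventually (fun m => eqv t (read (interp t) m [::])).
Proof.
elim: t => [x|xs IH z IHz|g z IHz|n o ts IH].
- by exists 0 => m _; apply: eqv_sym; apply: read_var.
- have [B HB] := eventually_fin IH; have [Mz HMz] := IHz.
  exists (maxn B Mz).+1 => -[//|m]; rewrite ltnS geq_max => /andP[HmB HmZ] /=.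
  apply: eqv_trans (pop_read _ (interp z) m [::]).
  apply: eqv_Pop => [g|]; last exact: HMz.
  by rewrite /= (read_shift (interp (Pop xs z))); apply: HB.
- have [Mz HMz] := IHz; exists Mz => m Hm.
  apply: eqv_trans (eqv_Push g (HMz m.+1 (leqW Hm))) _.
  apply: eqv_trans (push_read _ _ _ _) _.
  by rewrite -[rcons _ g]/[:: g] read_shift; apply: eqv_refl.
- have [B HB] := eventually_fin IH; exists B => m Hm.
  by apply: eqv_trans (eqv_Op o (fun i => HB m Hm i)) _; apply: read_op.
Qed.

Lemma extend_nil X : @extend X [::] = @retT _.
Proof. by apply: functional_extensionality => -[x l]; rewrite /extend cats0. Qed.

Lemma interp_leaf X (y : T (X * seq Gam)) u : interp (leaf y) u = bindT (extend u) y.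
Proof.
rewrite -{2}(presP y) /Tmap bindT_assoc.
transitivity (bindT (fun i => interp (stacked (leaves (pres y) i)) u) (shape (pres y))).
  by [].
congr bindT; apply: functional_extensionality => i.
by rewrite /interp sem_pushes bindT_retl.
Qed.

Lemma interp_read X (p : stT X) m : Rbound p m ->
  forall k acc w, m <= size acc + k -> interp (read p k acc) w = p (acc ++ w).
Proof.
move=> Hp; elim=> [|k IH] acc w Hm.
  by rewrite interp_leaf Hp // -(addn0 (size acc)).
case: w => [|g w].
  by rewrite [interp _ _]interp_leaf extend_nil bindT_retr cats0.
by rewrite -cat_rcons -IH // size_rcons addSnnS.
Qed.

Definition tens_interp X (q : tens Gam retT bindT X) : stT X := interp (rep q).

Lemma rep_class X (q : tens Gam retT bindT X) : proj1_sig q = eqv (rep q).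
Proof. exact: proj2_sig (constructive_indefinite_description _ (proj2_sig q)). Qed.

Lemma rep_cls X (t : tm X) : eqv (rep (cls retT bindT t)) t.
Proof. by rewrite -rep_class; apply: eqv_refl. Qed.

Lemma eqv_class X (a b : tm X) : eqv a b -> eqv a = eqv b.
Proof.
move=> Hab; apply: functional_extensionality => c; apply: propositional_extensionality.
by split; [apply: eqv_trans (eqv_sym Hab) | apply: eqv_trans Hab].
Qed.

Lemma tens_eq X (q1 q2 : tens Gam retT bindT X) : eqv (rep q1) (rep q2) -> q1 = q2.
Proof.
move=> /eqv_class E; move: (rep_class q1) (rep_class q2); rewrite E {E}.
move: (eqv (rep q2)) => P; case: q1 q2 => [P1 H1] [P2 H2] /= E1 E2.
by subst P1 P2; congr exist; apply: proof_irrelevance.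
Qed.

Lemma interp_cls X (t : tm X) : interp (rep (cls retT bindT t)) = interp t.
Proof. by rewrite /interp (eqv_sound (rep_cls t)). Qed.

(* Injectivity: by completeness, equal semantics give equivalent terms. *)
Lemma tens_interp_inj X : injective (@tens_interp X).
Proof.
move=> q1 q2 E; apply: tens_eq.
have [M1 H1] := normal_form (rep q1); have [M2 H2] := normal_form (rep q2).
have H1' := H1 _ (leq_maxl M1 M2); have H2' := H2 _ (leq_maxr M1 M2).
by rewrite /tens_interp in E; rewrite E in H1'; apply: eqv_trans H1' (eqv_sym H2').
Qed.

(* The image is R: interpretations satisfy the R condition, and an element
   of R is the interpretation of its normal form. *)
Lemma tens_interp_image X (p : stT X) :
  inR retT bindT p <-> exists q, tens_interp q = p.
Proof.
split=> [[m Hm]|[q <-]]; last exact: interp_Rbound.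
exists (cls retT bindT (read p m [::])); rewrite /tens_interp interp_cls.
by apply: functional_extensionality => w; apply: (interp_read Hm).
Qed.

Lemma tens_interp_ret X (x : X) : tens_interp (tens_ret Gam retT bindT x) = st_ret retT x.
Proof. exact: interp_cls. Qed.

Lemma tens_interp_bind X Y (f : X -> tens Gam retT bindT Y) (q : tens Gam retT bindT X) :
  tens_interp (tens_bind f q) = st_bind bindT (fun x => tens_interp (f x)) (tens_interp q).
Proof. by rewrite /tens_interp interp_cls /interp sem_subst sem_st_bind. Qed.

End StackTensor.

Theorem mainTheorem6 (Gam : finType) (T : Type -> Type)
    (retT : forall X, X -> T X) (bindT : forall X Y, (X -> T Y) -> T X -> T Y)
    (HT : monad_laws retT bindT) (Hfin : finitary retT bindT) :
  exists phi : forall X : Type, @tens Gam T retT bindT X -> @stT Gam T X,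
    (forall X, injective (phi X)) /\
    (forall X (p : @stT Gam T X), @inR Gam T retT bindT X p <-> exists q, phi X q = p) /\
    (forall X (x : X), phi X (@tens_ret Gam T retT bindT X x) = @st_ret Gam T retT X x) /\
    (forall X Y (f : X -> @tens Gam T retT bindT Y) (q : @tens Gam T retT bindT X),
        phi Y (@tens_bind Gam T retT bindT X Y f q)
        = @st_bind Gam T bindT X Y (fun x => phi Y (f x)) (phi X q)).
Proof.
exists (@tens_interp Gam T retT bindT); split; [|split; [|split]].
- exact: tens_interp_inj HT Hfin.
- exact: tens_interp_image HT Hfin.
- exact: tens_interp_ret HT.
- exact: tens_interp_bind HT.
Qed.
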